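(* Consider an instance of the min-cost chain-constrained spanning tree problem (defined in the context) for which the LP $(P_1)$ is feasible, and let $\lambda>1$. The following algorithm returns a spanning tree $T$ of $G$ with $c(T)\le\frac{\lambda}{\lambda-1}\cdot\mathrm{OPT}$ and $|\delta_T(S)|\le 9\lambda b_S$ for all $S\in\mathcal{S}$: (1) compute an optimal solution $x^*$ to $(P_\lambda)$ and a laminar decomposition $\mathcal{L}$ of $x^*$; (2) compute a fractional spanning tree $x'$ and laminar family $\mathcal{L}'$ such that $(x',\mathcal{L}')$ is a rainbow-free decomposition, $\mathrm{supp}(x')\subseteq\mathrm{supp}(x^* )$, $\mathcal{L}\subseteq\mathcal{L}'$, and $x'(\delta(S))\le x^*(\delta(S))$ for all $S\in\mathcal{S}$; (3) apply the Olver–Zenklusen rounding algorithm to $(x',\mathcal{L}')$, which returns for every $L\in\mathcal{L}'$ a spanning tree $T_L\subseteq\mathrm{supp}(x')$ of $G^{\mathcal{L}'}_L$ such that the concatenation $T$ of the $T_L$ is a spanning tree of $G$ with $|\delta_T(S)|\le 9x'(\delta(S))$ for all $S\in\mathcal{S}$; return $T$.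
   Context: Min-cost chain-constrained spanning tree: given an undirected connected graph $G=(V,E)$, costs $c_e\ge0$, a chain $\mathcal{S}$ of node sets $S_1\subsetneq\dots\subsetneq S_\ell\subsetneq V$ and integers $b_S$ ($S\in\mathcal{S}$), find a min-cost spanning tree $T$ with $|\delta_T(S)|\le b_S$ for all $S\in\mathcal{S}$, where $\delta_T(S)=T\cap\delta(S)$. Notation: $E(S)$ = edges with both ends in $S$, $\delta(S)$ = edges with exactly one end in $S$, $z(F)=\sum_{e\in F}z_e$, $\mathrm{supp}(z)=\{e:z_e>0\}$, $c(T)=\sum_{e\in T}c_e$. For $\lambda\ge1$, $(P_\lambda)$ is the LP: minimize $\sum_e c_ex_e$ subject to $x(E(S))\le|S|-1$ for all $\emptyset\ne S\subsetneq V$, $x(E)=|V|-1$, $x(\delta(S))\le\lambda b_S$ for all $S\in\mathcal{S}$, $x\ge0$. $\mathrm{OPT}(\lambda)$ is its optimal value and $\mathrm{OPT}=\mathrm{OPT}(1)$. Points satisfying the first two constraint families and $x\ge 0$ are fractional spanning trees. A laminar decomposition of a fractional spanning tree $x$ is an inclusion-wise maximal laminar family of nonempty sets $A\subseteq V$ with $x(E(A))=|A|-1$. For a laminar family $\mathcal{L}$ and $L\in\mathcal{L}$, $G^{\mathcal{L}}_L$ is the graph obtained from $(L,E(L))$ by contracting the maximal members of $\mathcal{L}$ strictly contained in $L$. With $\mathcal{S}_e=\{S\in\mathcal{S}:e\in\delta(S)\}$, edges $e,f$ form a rainbow if $\mathcal{S}_e\subseteq\mathcal{S}_f$ or $\mathcal{S}_f\subseteq\mathcal{S}_e$;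 $(x,\mathcal{L})$ is rainbow-free if $\mathcal{L}$ is a laminar decomposition of $x$ and for every $L\in\mathcal{L}$ no two edges of $\mathrm{supp}(x)\cap E(G^{\mathcal{L}}_L)$ form a rainbow. *)

From HB Require Import structures.
From mathcomp Require Import all_boot all_order all_algebra.
Set Implicit Arguments. Unset Strict Implicit. Unset Printing Implicit Defensive.
Import Order.TTheory GRing.Theory Num.Theory.
Local Open Scope ring_scope.

(* A (loopless or not) multigraph: vertex finType V, edge finType E,
   each edge e has endpoints src e and tgt e (undirected). *)
Section Defs.
Variables (V E : finType) (src tgt : E -> V).

Definition Eset (S : {set V}) : {set E} := [set e | (src e \in S) && (tgt e \in S)].
Definition delta (S : {set V}) : {set E} := [set e | (src e \in S) != (tgt e \in S)].

Definition is_chain (Ss : seq {set V}) : bool :=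
  sorted (fun A B : {set V} => A \proper B) Ss && all (fun S : {set V} => S \proper [set: V]) Ss.

Definition adj (U : finType) (p q : E -> U) (F : {set E}) : rel U :=
  fun u v => [exists e in F, ((p e == u) && (q e == v)) || ((p e == v) && (q e == u))].

Definition spanning_tree (U : finType) (p q : E -> U) (W : {set U}) (Fall F : {set E}) : Prop :=
  [/\ F \subset Fall,
      (forall u v, u \in W -> v \in W -> connect (adj p q F) u v)
    & forall e, e \in F -> ~~ connect (adj p q (F :\ e)) (p e) (q e)].

Definition spanning_tree_G (F : {set E}) : Prop :=
  spanning_tree src tgt [set: V] [set: E] F.

Definition laminar (L : {set {set V}}) : Prop :=
  forall A B, A \in L -> B \in L -> [|| A \subset B, B \subset A | [disjoint A & B]].

(* G^L_A: graph (A, E(A)) with the maximal members of L strictly inside A contracted.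
   Vertices are represented by crep L A v : the maximal member of L strictly inside A
   containing v, or [set v] if there is none. *)
Definition maxchild (L : {set {set V}}) (A C : {set V}) : bool :=
  [&& C \in L, C \proper A & [forall D in L, ~~ ((C \proper D) && (D \proper A))]].
Definition crep (L : {set {set V}}) (A : {set V}) (v : V) : {set V} :=
  odflt [set v] [pick C | maxchild L A C && (v \in C)].
Definition contracted_vertices (L : {set {set V}}) (A : {set V}) : {set {set V}} :=
  [set crep L A v | v in A].
Definition contracted_edges (L : {set {set V}}) (A : {set V}) : {set E} :=
  [set e in Eset A | crep L A (src e) != crep L A (tgt e)].
Definition spanning_tree_contracted (L : {set {set V}}) (A : {set V}) (F : {set E}) : Prop :=
  spanning_tree (fun e => crep L A (src e)) (fun e => crep L A (tgt e))
    (contracted_vertices L A) (contracted_edges L A) F.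

Definition rainbow (Ss : seq {set V}) (e f : E) : bool :=
  all (fun S : {set V} => (e \in delta S) ==> (f \in delta S)) Ss
  || all (fun S : {set V} => (f \in delta S) ==> (e \in delta S)) Ss.

Variable R : realFieldType.

Definition xsum (x : E -> R) (F : {set E}) : R := \sum_(e in F) x e.
Definition supp (x : E -> R) : {set E} := [set e | 0 < x e].
Definition cost (c x : E -> R) : R := \sum_(e : E) c e * x e.
Definition cost_set (c : E -> R) (T : {set E}) : R := \sum_(e in T) c e.

Definition fractional_spanning_tree (x : E -> R) : Prop :=
  [/\ (forall e, 0 <= x e),
      xsum x [set: E] = #|V|%:R - 1
    & forall S : {set V}, S != set0 -> S != [set: V] -> xsum x (Eset S) <= #|S|%:R - 1].

Definition P_feasible (Ss : seq {set V}) (b : {set V} -> int) (lam : R) (x : E -> R) : Prop :=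
  fractional_spanning_tree x /\ forall S, S \in Ss -> xsum x (delta S) <= lam * (b S)%:~R.
Definition P_optimal (Ss : seq {set V}) (b : {set V} -> int) (lam : R) (c x : E -> R) : Prop :=
  P_feasible Ss b lam x /\ forall z, P_feasible Ss b lam z -> cost c x <= cost c z.

Definition tight (x : E -> R) (A : {set V}) : Prop := xsum x (Eset A) = #|A|%:R - 1.
Definition tight_laminar (x : E -> R) (L : {set {set V}}) : Prop :=
  laminar L /\ forall A, A \in L -> A != set0 /\ tight x A.
Definition laminar_decomposition (x : E -> R) (L : {set {set V}}) : Prop :=
  tight_laminar x L /\ forall L2, tight_laminar x L2 -> L \subset L2 -> L2 = L.

Definition rainbow_free (Ss : seq {set V}) (x : E -> R) (L : {set {set V}}) : Prop :=
  laminar_decomposition x L /\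
  forall A, A \in L -> forall e f,
    e \in supp x :&: contracted_edges L A -> f \in supp x :&: contracted_edges L A ->
    e != f -> ~~ rainbow Ss e f.

End Defs.

(* Every A in L lies in L', and the trees T_B of the members B of L' inside A together
   connect A; since T is a forest, it meets E(A) in exactly |A| - 1 edges.  As L is a
   maximal laminar family of x*-tight sets, uncrossing then gives chi(E(S)) >= |S| - 1
   for the characteristic vector chi of T and every x*-tight set S; moreover supp chi
   is inside supp x*.  Hence x* + t (x* - chi) is still a fractional spanning tree for
   some t > 0, and a suitable convex combination of it with any solution y of (P_1) is
   feasible for (P_lambda); optimality of x* then gives
   c x* + (lambda - 1) c(T) <= lambda c(y).  The degree bound is just
   9 x'(delta(S)) <= 9 x*(delta(S)) <= 9 lambda b_S. *)

From Pilot Require Import Defs.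
From HB Require Import structures.
From mathcomp Require Import all_boot all_order all_algebra.
From mathcomp Require Import ring lra.
Set Implicit Arguments. Unset Strict Implicit. Unset Printing Implicit Defensive.
Import Order.TTheory GRing.Theory Num.Theory.

Lemma connect_preserves (T : finType) (r : rel T) (P : pred T) x y :
  (forall a b, P a -> r a b -> P b) -> P x -> connect r x y -> P y.
Proof.
move=> closedP Px /connectP [p + ->] {y}.
by elim: p x Px => [|z p IHp] x Px //= /andP [rxz]; apply: IHp (closedP _ _ Px rxz).
Qed.

Lemma connect_quotient (T K : finType) (r : rel T) (rK : rel K) (phi : T -> K)
    (A : {set T}) u v :
  (forall a b, a \in A -> b \in A -> phi a = phi b -> connect r a b) ->
  (forall k k', rK k k' ->
     exists a b, [/\ a \in A, b \in A, phi a = k, phi b = k' & connect r a b]) ->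
  u \in A -> v \in A -> connect rK (phi u) (phi v) -> connect r u v.
Proof.
move=> fibre edge uA vA cuv.
pose P k := [forall z, (z \in A) && (phi z == k) ==> connect r u z].
suff /forallP /(_ v) : P (phi v) by rewrite vA eqxx.
apply: (connect_preserves _ _ cuv) => [k k' /forallP Pk /edge [a [b [aA bA ak bk' rab]]]|].
  subst k k'; apply/forallP => z; apply/implyP => /andP [zA /eqP bz].
  have ua : connect r u a by have := Pk a; rewrite aA eqxx.
  exact: connect_trans (connect_trans ua rab) (fibre _ _ bA zA (esym bz)).
by apply/forallP => z; apply/implyP => /andP [zA /eqP uz]; apply: fibre.
Qed.

Section Adjacency.
Variables (E U : finType) (p q : E -> U).
Implicit Types F : {set E}.
Local Notation adjF := (adj p q).

Lemma adjP F u v :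
  reflect (exists2 f, f \in F &
             ((p f == u) && (q f == v)) || ((p f == v) && (q f == u)))
          (adjF F u v).
Proof. by apply: (iffP existsP) => [[f /andP []] | [f Ff uv]]; exists f; rewrite ?Ff. Qed.

Lemma adj_sym F : symmetric (adjF F).
Proof. by move=> u v; apply/adjP/adjP => -[f Ff uv]; exists f; rewrite // orbC. Qed.

Lemma connect_adj_sym F : connect_sym (adjF F).
Proof. exact/sym_connect_sym/adj_sym. Qed.

Lemma adj_edge F f : f \in F -> adjF F (p f) (q f).
Proof. by move=> Ff; apply/adjP; exists f; rewrite ?eqxx. Qed.

Lemma connect_adjS F1 F2 u v :
  F1 \subset F2 -> connect (adjF F1) u v -> connect (adjF F2) u v.
Proof.
move=> sF; apply: connect_sub => a b /adjP [f Ff ab].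
by apply/connect1/adjP; exists f; rewrite ?(subsetP sF).
Qed.

End Adjacency.

Section Graph.
Variables (V E : finType) (src tgt : E -> V).
Implicit Types (F : {set E}) (X Y : {set V}).
Local Notation adjF := (adj src tgt).
Local Notation Es := (Eset src tgt).

Lemma EsetS X Y : X \subset Y -> Es X \subset Es Y.
Proof.
by move=> sXY; apply/subsetP => f; rewrite !inE => /andP [sX tX]; rewrite !(subsetP sXY).
Qed.

Lemma EsetT : Es [set: V] = [set: E].
Proof. by apply/setP => e; rewrite !inE. Qed.

Lemma EsetI X Y : Es (X :&: Y) = Es X :&: Es Y.
Proof. by apply/setP => f; rewrite !inE andbACA. Qed.

Definition connects F X := forall u v, u \in X -> v \in X -> connect (adjF F) u v.

Definition forest F := forall e, e \in F -> ~~ connect (adjF (F :\ e)) (src e) (tgt e).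

Lemma forestS F1 F2 : F1 \subset F2 -> forest F2 -> forest F1.
Proof.
by move=> sF forF2 e /(subsetP sF) /forF2; apply: contra; apply/connect_adjS/setSD.
Qed.

Lemma connects_from F X a :
  (forall u, u \in X -> connect (adjF F) a u) -> connects F X.
Proof.
by move=> aX u v /aX au /aX; apply: connect_trans; rewrite connect_adj_sym.
Qed.

Definition closed_under F Y := {in F, forall f, (src f \in Y) = (tgt f \in Y)}.

Lemma component_closed F a : closed_under F [set w | connect (adjF F) a w].
Proof.
move=> f Ff; rewrite !inE; apply/idP/idP => af.
  by apply: connect_trans af (connect1 _); apply: adj_edge.
by apply: connect_trans af _; rewrite connect_adj_sym; apply/connect1/adj_edge.
Qed.

Lemma closed_underC F Y : closed_under F Y -> closed_under F (~: Y).
Proof. by move=> clY f Ff; rewrite !inE clY. Qed.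

Lemma connect_restrict F Y a b : closed_under F Y -> a \in Y ->
  connect (adjF F) a b -> connect (adjF (F :&: Es Y)) a b.
Proof.
move=> clY aY ab.
pose P w := (w \in Y) && connect (adjF (F :&: Es Y)) a w.
suff /andP [] : P b by [].
apply: (connect_preserves _ _ ab); last by rewrite /P aY connect0.
move=> u w /andP [uY au] /adjP [f Ff uw].
have sY : src f \in Y.
  by case/orP: uw => /andP [/eqP sf /eqP tf]; [rewrite sf | rewrite clY // tf].
have fY : f \in F :&: Es Y by rewrite !inE Ff sY -clY.
apply/andP; split.
  by case/orP: uw => /andP [/eqP sf /eqP tf]; [rewrite -tf -clY | rewrite -sf].
apply: connect_trans au (connect1 _); apply/adjP; exists f => //.
Qed.

Lemma card_closed_split F Y : closed_under F Y ->
  #|F| = #|F :&: Es Y| + #|F :&: Es (~: Y)|.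
Proof.
move=> clY; rewrite -(cardsID (Es Y) F); congr (_ + _); apply: eq_card => f.
by rewrite !inE; case Ff: (f \in F); rewrite ?andbT ?andbF // -clY // !andbb.
Qed.

Lemma connect_setD1 F e w : e \in F -> connect (adjF F) (src e) w ->
  connect (adjF (F :\ e)) (src e) w || connect (adjF (F :\ e)) (tgt e) w.
Proof.
move=> Fe.
apply: (connect_preserves
  (P := fun w => connect (adjF (F :\ e)) (src e) w || connect (adjF (F :\ e)) (tgt e) w))
  => [u v /orP cu /adjP [f Ff uv]|]; last by rewrite connect0.
have [fe | fe] := eqVneq f e.
  subst f; case/orP: uv => /andP [/eqP sf /eqP tf]; first by rewrite -tf connect0 orbT.
  by rewrite -sf connect0.
have uv' : adjF (F :\ e) u v by apply/adjP; exists f; rewrite // !inE fe.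
by case: cu => cu; rewrite (connect_trans cu (connect1 uv')) ?orbT.
Qed.

Lemma connects_set0 X x : x \in X -> connects set0 X -> X = [set x].
Proof.
move=> xX conn; apply/setP => v; rewrite inE; apply/idP/eqP => [vX | -> //].
have /eqP // : pred1 x v.
apply: (connect_preserves _ _ (conn _ _ xX vX)) => //= a b _.
by case/adjP => f; rewrite inE.
Qed.

Lemma card_connected_forest F X : forest F -> F \subset Es X -> connects F X ->
  X != set0 -> #|X| = #|F|.+1.
Proof.
have [n] := ubnP #|F|; elim: n => // n IHn in F X *; rewrite ltnS => Fn forF sFX conn.
case/set0Pn => x xX; have [F0 | [e Fe]] := set_0Vmem F.
  by rewrite F0 cards0 (connects_set0 xX) ?cards1 // -F0.
set F' := F :\ e; set Y := [set w | connect (adjF F') (src e) w].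
have clY : closed_under F' Y by apply: component_closed.
have tY : tgt e \notin Y by rewrite inE forF.
have /andP [sX tX] : (src e \in X) && (tgt e \in X) by have := subsetP sFX e Fe; rewrite inE.
have sF'F : F' \subset F := subD1set F e.
have card_part Z z : closed_under F' Z -> z \in X :&: Z ->
    (forall u, u \in X :&: Z -> connect (adjF F') z u) -> #|X :&: Z| = #|F' :&: Es Z|.+1.
  move=> clZ /[dup] zXZ /setIP [_ zZ] zconn; apply: IHn.
  - rewrite (leq_ltn_trans (subset_leq_card (subsetIl _ _))) //.
    by rewrite (cardsD1 e F) Fe in Fn.
  - exact: forestS (subset_trans (subsetIl _ _) sF'F) forF.
  - by rewrite EsetI setISS // (subset_trans sF'F).
  - by apply: (connects_from (a := z)) => u /zconn; apply: connect_restrict.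
  - by apply/set0Pn; exists z.
have cardXY : #|X :&: Y| = #|F' :&: Es Y|.+1.
  apply: (card_part _ (src e) clY) => [|u /setIP [_]]; last by rewrite inE.
  by rewrite inE sX inE connect0.
have cardXnY : #|X :&: ~: Y| = #|F' :&: Es (~: Y)|.+1.
  apply: (card_part _ (tgt e) (closed_underC clY)) => [|u /setIP [uX]].
    by rewrite inE tX in_setC tY.
  rewrite in_setC inE => uY.
  by have := connect_setD1 Fe (conn _ _ sX uX); rewrite (negbTE uY).
rewrite -(cardsID Y X) setDE cardXY cardXnY (cardsD1 e F) Fe (card_closed_split clY).
by rewrite addSn addnS.
Qed.

Lemma mem_crep (L : {set {set V}}) A v : v \in crep L A v.
Proof. by rewrite /crep; case: pickP => [C /andP [_ ->] | _] //=; rewrite inE. Qed.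

Lemma crepP (L : {set {set V}}) A v :
  (crep L A v \in L /\ crep L A v \proper A) \/ crep L A v = [set v].
Proof.
by rewrite /crep; case: pickP => [C /andP [/and3P [LC CA _] _] | _] /=; [left | right].
Qed.

Lemma contracted_edges_sub (L : {set {set V}}) A : contracted_edges src tgt L A \subset Es A.
Proof. by apply/subsetP => f; rewrite inE => /andP []. Qed.

Lemma connects_contracted_trees (Lp : {set {set V}}) (TL : {set V} -> {set E}) :
  (forall A, A \in Lp -> spanning_tree_contracted src tgt Lp A (TL A)) ->
  forall A, A \in Lp -> connects (\bigcup_(B in Lp | B \subset A) TL B) A.
Proof.
move=> trees A; have [n] := ubnP #|A|; elim: n => // n IHn in A *.
rewrite ltnS => An LpA; set U := \bigcup_(B in Lp | B \subset A) TL B.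
have [sTA connA _] := trees A LpA.
have sTU : TL A \subset U by apply: (bigcup_sup A); rewrite LpA subxx.
have sTEs : TL A \subset Es A := subset_trans sTA (contracted_edges_sub Lp A).
move=> u v uA vA.
have := connA _ _ (imset_f (crep Lp A) uA) (imset_f (crep Lp A) vA).
apply: connect_quotient uA vA => [a b aA bA ab | k k' /adjP [f Tf kk']].
  have := mem_crep Lp A b; rewrite -ab.
  case: (crepP Lp A a) => [[LpC CA] | ->]; last by rewrite inE => /eqP ->.
  move=> bC; apply: connect_adjS (IHn _ _ LpC _ _ (mem_crep Lp A a) bC).
    apply/bigcupsP => B /andP [LpB BC]; apply: (bigcup_sup B).
    by rewrite LpB (subset_trans BC (proper_sub CA)).
  by apply: leq_trans An; apply: proper_card.
have /andP [sfA tfA] : (src f \in A) && (tgt f \in A).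
  by have := subsetP sTEs f Tf; rewrite inE.
have Uf : connect (adjF U) (src f) (tgt f) by apply/connect1/adj_edge/(subsetP sTU).
case/orP: kk' => /andP [/eqP <- /eqP <-]; first by exists (src f), (tgt f).
by exists (tgt f), (src f); rewrite connect_adj_sym.
Qed.

Lemma card_tree_Eset (Lp : {set {set V}}) (TL : {set V} -> {set E}) A :
  (forall B, B \in Lp -> spanning_tree_contracted src tgt Lp B (TL B)) ->
  forest (\bigcup_(B in Lp) TL B) -> A \in Lp -> A != set0 ->
  #|A| = #|(\bigcup_(B in Lp) TL B) :&: Es A|.+1.
Proof.
move=> trees forT LpA A0; apply: card_connected_forest => //.
- exact: forestS (subsetIl _ _) forT.
- exact: subsetIr.
move=> u v uA vA; apply: connect_adjS (connects_contracted_trees trees LpA uA vA).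
apply/bigcupsP => B /andP [LpB BA]; rewrite subsetI (bigcup_sup B LpB) /=.
have [sTB _ _] := trees B LpB.
exact: subset_trans sTB (subset_trans (contracted_edges_sub Lp B) (EsetS BA)).
Qed.

End Graph.

Section Crossing.
Variable V : finType.
Implicit Types S A B : {set V}.

Definition crosses S B := ~~ [|| S \subset B, B \subset S | [disjoint S & B]].

Lemma noncrossing_setI S A B :
  ~~ crosses S B -> ~~ crosses A B -> ~~ crosses (S :&: A) B.
Proof.
rewrite /crosses !negbK => /or3P [SB | BS | dSB] nAB.
- by rewrite (subset_trans (subsetIl S A) SB).
- case/or3P: nAB => [AB | BA | dAB].
  + by rewrite (subset_trans (subsetIr S A) AB).
  + by rewrite subsetI BS BA orbT.
  + by rewrite (disjointWl (subsetIr S A) dAB) !orbT.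
- by rewrite (disjointWl (subsetIl S A) dSB) !orbT.
Qed.

Lemma noncrossing_setU S A B : S :&: A != set0 ->
  ~~ crosses S B -> ~~ crosses A B -> ~~ crosses (S :|: A) B.
Proof.
case/set0Pn => z; rewrite inE => /andP [zS zA].
rewrite /crosses !negbK => /or3P [SB | BS | dSB].
2: by rewrite (subset_trans BS (subsetUl S A)) orbT.
all: case/or3P => [AB | BA | dAB]; try by rewrite (subset_trans BA (subsetUr S A)) orbT.
- by rewrite subUset SB AB.
- by have := disjointFr dAB zA; rewrite (subsetP SB z zS).
- by have := disjointFr dSB zS; rewrite (subsetP AB z zA).
- suff -> : [disjoint S :|: A & B] by rewrite !orbT.
  by rewrite disjoints_subset subUset -!disjoints_subset dSB dAB.
Qed.

Lemma noncrossing_setIl S A : ~~ crosses (S :&: A) A.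
Proof. by rewrite /crosses negbK subsetIr. Qed.

Lemma noncrossing_setUl S A : ~~ crosses (S :|: A) A.
Proof. by rewrite /crosses negbK subsetUr orbT. Qed.

Lemma crosses_setI_neq0 S A : crosses S A -> S :&: A != set0.
Proof. by apply: contraNN; rewrite setI_eq0 => ->; rewrite !orbT. Qed.

End Crossing.

Local Open Scope ring_scope.

Section Vectors.
Variables (R : realFieldType) (V E : finType) (src tgt : E -> V).
Implicit Types (x z : E -> R) (F T : {set E}).
Local Notation Es := (Eset src tgt).

Definition charvec T : E -> R := fun e => (e \in T)%:R.

Lemma charvec_ge0 T e : 0 <= charvec T e.
Proof. exact: ler0n. Qed.

Lemma xsum_charvec T F : xsum (charvec T) F = #|T :&: F|%:R.
Proof.
rewrite /xsum /charvec -sum1_card natr_sum big_mkcond [RHS]big_mkcond /=.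
by apply: eq_bigr => e _; rewrite inE; case: (e \in T); case: (e \in F).
Qed.

Lemma xsum_charvec_card (X : {set V}) T F :
  #|X| = #|T :&: F|.+1 -> xsum (charvec T) F = #|X|%:R - 1.
Proof. by rewrite xsum_charvec => ->; rewrite -addn1 natrD addrK. Qed.

Lemma charvec_le0 x T e : T \subset supp x -> x e = 0 -> charvec T e <= 0.
Proof.
move=> Tx x0; rewrite /charvec; case: (boolP (e \in T)) => // /(subsetP Tx).
by rewrite inE x0 ltxx.
Qed.

Lemma cost_set_charvec (c : E -> R) T : cost_set c T = cost c (charvec T).
Proof.
rewrite /cost_set /cost big_mkcond /=; apply: eq_bigr => e _.
by rewrite /charvec; case: (e \in T); rewrite ?mulr1 ?mulr0.
Qed.

Lemma xsum_ge0 x F : (forall e, 0 <= x e) -> 0 <= xsum x F.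
Proof. by move=> x_ge0; apply: sumr_ge0. Qed.

Lemma xsum_comb (a b : R) x z F :
  xsum (fun e => a * x e + b * z e) F = a * xsum x F + b * xsum z F.
Proof. by rewrite /xsum big_split /= !mulr_sumr. Qed.

Lemma xsum_combB (a b : R) x z F :
  xsum (fun e => a * x e - b * z e) F = a * xsum x F - b * xsum z F.
Proof. by rewrite /xsum big_split sumrN /= !mulr_sumr. Qed.

Lemma cost_comb (c : E -> R) (a b : R) x z :
  cost c (fun e => a * x e + b * z e) = a * cost c x + b * cost c z.
Proof. by rewrite /cost !mulr_sumr -big_split /=; apply: eq_bigr => e _; ring. Qed.

Lemma cost_combB (c : E -> R) (a b : R) x z :
  cost c (fun e => a * x e - b * z e) = a * cost c x - b * cost c z.
Proof. by rewrite /cost !mulr_sumr -sumrB /=; apply: eq_bigr => e _; ring. Qed.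

Definition cross_edges (S A : {set V}) : {set E} :=
  [set e | ((src e \in S :\: A) && (tgt e \in A :\: S)) ||
           ((src e \in A :\: S) && (tgt e \in S :\: A))].

Lemma xsum_EsetUI x (S A : {set V}) :
  xsum x (Es (S :|: A)) + xsum x (Es (S :&: A)) =
  xsum x (Es S) + xsum x (Es A) + xsum x (cross_edges S A).
Proof.
rewrite /xsum !(big_mkcond (fun e => e \in _)) -!big_split /=.
apply: eq_bigr => e _; rewrite !inE.
by case: (src e \in S); case: (src e \in A); case: (tgt e \in S); case: (tgt e \in A);
  rewrite /= ?addr0 ?add0r.
Qed.

End Vectors.

Section Uncrossing.
Variables (R : realFieldType) (V E : finType) (src tgt : E -> V).
Variables (x : E -> R) (L : {set {set V}}).
Hypotheses (x_fst : fractional_spanning_tree src tgt x)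
           (x_dec : laminar_decomposition src tgt x L).
Local Notation Es := (Eset src tgt).
Local Notation tight := (tight src tgt x).

Lemma fst_Eset_le X : X != set0 -> xsum x (Es X) <= #|X|%:R - 1.
Proof.
case: x_fst => _ sumE le_sets X0; have [-> | XT] := eqVneq X [set: V]; last exact: le_sets.
by rewrite EsetT sumE cardsT.
Qed.

Lemma fst_vertices_neq0 : [set: V] != set0.
Proof.
case: x_fst => x_ge0 sumE _; rewrite -card_gt0 cardsT -(ltr_nat R).
by have := xsum_ge0 [set: E] x_ge0; rewrite sumE; lra.
Qed.

Lemma tight_noncrossing_mem S : S != set0 -> tight S ->
  (forall B, B \in L -> ~~ crosses S B) -> S \in L.
Proof.
move=> S0 tS noncross; have [[lamL memL] maxL] := x_dec.
suff <- : S |: L = L by rewrite setU11.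
apply: maxL (subsetUr _ _); split=> [A B | A].
  case/setU1P => [-> | LA] /setU1P [-> | LB]; last exact: lamL.
  - by rewrite subxx.
  - by have := noncross B LB; rewrite /crosses negbK.
  - have := noncross A LA; rewrite /crosses negbK disjoint_sym.
    by case/or3P => ->; rewrite ?orbT.
by case/setU1P => [-> | /memL].
Qed.

Lemma tight_uncross S A : tight S -> tight A -> S :&: A != set0 ->
  [/\ tight (S :|: A), tight (S :&: A) & xsum x (cross_edges src tgt S A) = 0].
Proof.
rewrite /Defs.tight => tS tA SA0.
have SA0' := subset_neq0 (subset_trans (subsetIl S A) (subsetUl S A)) SA0.
have leU := fst_Eset_le SA0'; have leI := fst_Eset_le SA0.
have cross_ge0 : 0 <= xsum x (cross_edges src tgt S A) by apply: xsum_ge0; case: x_fst.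
have card_UI : #|S :|: A|%:R + #|S :&: A|%:R = #|S|%:R + #|A|%:R :> R.
  by rewrite -!natrD cardsUI.
have := xsum_EsetUI src tgt x S A; split; lra.
Qed.

Variable z : E -> R.
Hypotheses (z_supp : forall e, x e = 0 -> z e <= 0)
           (z_dec : forall A, A \in L -> xsum z (Es A) = #|A|%:R - 1).

Lemma xsum_cross_le0 S A : xsum x (cross_edges src tgt S A) = 0 ->
  xsum z (cross_edges src tgt S A) <= 0.
Proof.
move=> x_cross; apply: sumr_le0 => e cross_e; apply: z_supp.
by apply: (psumr_eq0P _ x_cross) => // f _; case: x_fst.
Qed.

Lemma tight_xsum_ge S : S != set0 -> tight S -> #|S|%:R - 1 <= xsum z (Es S).
Proof.
have [n] := ubnP #|[set B in L | crosses S B]|; elim: n => // n IHn in S *.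
rewrite ltnS => Sn S0 tS; have [[lamL memL] _] := x_dec.
have [/existsP [A /andP [LA SA]] | nocross] := boolP [exists B in L, crosses S B]; last first.
  rewrite z_dec ?tight_noncrossing_mem // => B LB.
  by apply: contraNN nocross => SB; apply/existsP; exists B; rewrite LB.
have SA0 := crosses_setI_neq0 SA; have [_ tA] := memL A LA.
have [tU tI x_cross] := tight_uncross tS tA SA0.
have lamA B : B \in L -> ~~ crosses A B by move=> LB; rewrite /crosses negbK lamL.
have fewer Y : (forall B, B \in L -> ~~ crosses S B -> ~~ crosses Y B) ->
    ~~ crosses Y A -> (#|[set B in L | crosses Y B]| < n)%N.
  move=> SY YA; apply: leq_trans Sn; apply: proper_card; apply/properP; split.
    apply/subsetP => B; rewrite !inE => /andP [LB]; rewrite LB.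
    by apply: contraLR; apply: SY.
  by exists A; rewrite !inE LA ?SA // (negbTE YA).
have rU := IHn (S :|: A) (fewer _ (fun B LB SB => noncrossing_setU SA0 SB (lamA B LB))
  (noncrossing_setUl S A)).
have rI := IHn (S :&: A) (fewer _ (fun B LB SB => noncrossing_setI SB (lamA B LB))
  (noncrossing_setIl S A)).
have U0 := subset_neq0 (subsetUl S A) S0.
have := xsum_EsetUI src tgt z S A; have := xsum_cross_le0 x_cross.
have card_UI : #|S :|: A|%:R + #|S :&: A|%:R = #|S|%:R + #|A|%:R :> R.
  by rewrite -!natrD cardsUI.
have := rU U0 tU; have := rI SA0 tI; have := z_dec LA; lra.
Qed.

End Uncrossing.

Section NearZero.
Variable R : realFieldType.

Lemma affine_le_near0 (a b c : R) : a <= c -> a < c \/ b <= 0 ->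
  exists2 e, 0 < e & forall t, 0 < t -> t <= e -> a + t * b <= c.
Proof.
move=> ac ac_b; have [b_le0 | b_gt0] := lerP b 0; first by exists 1 => // t t_gt0 _; nra.
have {ac_b} ac : a < c by case: ac_b => //; rewrite leNgt b_gt0.
exists ((c - a) / b) => [|t t_gt0]; first by apply: divr_gt0; lra.
by rewrite ler_pdivlMr // => tb; lra.
Qed.

Lemma near0_forall (I : finType) (P : I -> R -> Prop) :
  (forall i, exists2 e, 0 < e & forall t, 0 < t -> t <= e -> P i t) ->
  exists2 e, 0 < e & forall i, P i e.
Proof.
move=> near0; suff [e e_gt0 Pe] : exists2 e, 0 < e &
    forall i, i \in enum I -> forall t, 0 < t -> t <= e -> P i t.
  by exists e => // i; apply: Pe; rewrite ?mem_enum.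
elim: (enum I) => [|i s [e2 e2_gt0 Pe2]]; first by exists 1.
have [e1 e1_gt0 Pe1] := near0 i.
exists (Num.min e1 e2) => [|j]; first by rewrite lt_min e1_gt0.
rewrite inE => /predU1P [-> | sj] t t_gt0; rewrite le_min => /andP [te1 te2].
  exact: Pe1.
exact: Pe2.
Qed.

End NearZero.

Section Perturbation.
Variables (R : realFieldType) (V E : finType) (src tgt : E -> V).
Local Notation Es := (Eset src tgt).

Lemma fst_convex (w y : E -> R) (a b : R) :
  fractional_spanning_tree src tgt w -> fractional_spanning_tree src tgt y ->
  0 <= a -> 0 <= b -> a + b = 1 ->
  fractional_spanning_tree src tgt (fun e => a * w e + b * y e).
Proof.
move=> [w_ge0 w_sum w_sets] [y_ge0 y_sum y_sets] a_ge0 b_ge0 ab1; split.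
- by move=> e; rewrite addr_ge0 ?mulr_ge0.
- by rewrite xsum_comb w_sum y_sum -mulrDl ab1 mul1r.
move=> S S0 ST; rewrite xsum_comb.
have := ler_wpM2l a_ge0 (w_sets S S0 ST); have := ler_wpM2l b_ge0 (y_sets S S0 ST).
nra.
Qed.

Lemma fst_beyond (x z : E -> R) :
  fractional_spanning_tree src tgt x ->
  xsum z [set: E] = #|V|%:R - 1 ->
  (forall e, x e = 0 -> z e <= 0) ->
  (forall X, X != set0 -> tight src tgt x X -> #|X|%:R - 1 <= xsum z (Es X)) ->
  exists2 t, 0 < t & fractional_spanning_tree src tgt (fun e => (1 + t) * x e - t * z e).
Proof.
move=> x_fst z_sum z_supp z_tight; have [x_ge0 x_sum _] := x_fst.
pose P (i : {set V} + E) t := match i with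
  | inl X => X != set0 -> xsum x (Es X) + t * (xsum x (Es X) - xsum z (Es X)) <= #|X|%:R - 1
  | inr e => - x e + t * (z e - x e) <= 0 end.
have [t t_gt0 Pt] : exists2 t, 0 < t & forall i, P i t.
  apply: near0_forall => -[X | e] /=.
    have [-> | X0] := eqVneq X set0; first by exists 1 => // t _ _; rewrite eqxx.
    have slack : xsum x (Es X) < #|X|%:R - 1 \/ xsum x (Es X) - xsum z (Es X) <= 0.
      have [tX | ntX] := eqVneq (xsum x (Es X)) (#|X|%:R - 1).
        by right; have := z_tight X X0 tX; lra.
      by left; rewrite lt_neqAle ntX fst_Eset_le.
    have [e e_gt0 le_e] := affine_le_near0 (fst_Eset_le x_fst X0) slack.
    by exists e => // t t_gt0 te _; apply: le_e.
  apply: affine_le_near0; first by have := x_ge0 e; lra.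
  have [x0 | x_neq0] := eqVneq (x e) 0; first by right; have := z_supp e x0; lra.
  by left; have := x_ge0 e; rewrite le_eqVlt eq_sym (negbTE x_neq0) /=; lra.
exists t => //; split.
- by move=> e; have := Pt (inr e); rewrite /=; lra.
- by rewrite xsum_combB x_sum z_sum; ring.
- by move=> X X0 _; have := Pt (inl X) X0; rewrite xsum_combB; lra.
Qed.

Variables (Ss : seq {set V}) (b : {set V} -> int) (c : E -> R).

Lemma optimal_cost_beyond (x z y : E -> R) (t lam : R) :
  0 < t -> 1 < lam -> P_optimal src tgt Ss b lam c x -> (forall e, 0 <= z e) ->
  fractional_spanning_tree src tgt (fun e => (1 + t) * x e - t * z e) ->
  P_feasible src tgt Ss b 1 y ->
  cost c x + (lam - 1) * cost c z <= lam * cost c y.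
Proof.
move=> t_gt0 lam_gt1 [[_ x_deg] x_min] z_ge0 w_fst [y_fst y_deg].
set w := fun e => _ in w_fst.
pose D := (1 + t) * lam - 1; have D_gt0 : 0 < D by rewrite /D; nra.
have D_neq0 : D != 0 := lt0r_neq0 D_gt0.
pose al := (lam - 1) / D; pose be := t * lam / D.
have al_ge0 : 0 <= al by apply: divr_ge0; lra.
have be_ge0 : 0 <= be by apply: divr_ge0; nra.
have al_be : al + be = 1 by rewrite /al /be /D; field.
have al_be_lam : al * (1 + t) * lam + be = lam by rewrite /al /be /D; field.
have p_deg S : S \in Ss ->
    xsum (fun e => al * w e + be * y e) (delta src tgt S) <= lam * (b S)%:~R.
  move=> SS; rewrite xsum_comb xsum_combB.
  have w_deg : (1 + t) * xsum x (delta src tgt S) - t * xsum z (delta src tgt S)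
      <= (1 + t) * (lam * (b S)%:~R).
    by have := xsum_ge0 (delta src tgt S) z_ge0; have := x_deg S SS; nra.
  apply: le_trans (lerD (ler_wpM2l al_ge0 w_deg) (ler_wpM2l be_ge0 (y_deg S SS))) _.
  by rewrite -[X in _ <= X * _]al_be_lam; lra.
have := x_min _ (conj (fst_convex w_fst y_fst al_ge0 be_ge0 al_be) p_deg).
rewrite cost_comb cost_combB.
have -> : al * ((1 + t) * cost c x - t * cost c z) + be * cost c y =
    ((lam - 1) * ((1 + t) * cost c x - t * cost c z) + t * lam * cost c y) / D.
  by rewrite /al /be; field.
rewrite ler_pdivlMr // /D => opt; nra.
Qed.

End Perturbation.

Theorem theorem3 (R : realFieldType) (V E : finType) (src tgt : E -> V)
  (c : E -> R) (Ss : seq {set V}) (b : {set V} -> int) (lam : R) :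
  (forall u v, connect (adj src tgt [set: E]) u v) ->
  (forall e, 0 <= c e) ->
  is_chain Ss ->
  (exists y : E -> R, P_feasible src tgt Ss b 1 y) ->
  1 < lam ->
  (* step (1) *)
  forall (xs : E -> R) (L : {set {set V}}),
  P_optimal src tgt Ss b lam c xs ->
  laminar_decomposition src tgt xs L ->
  (* step (2) *)
  forall (xp : E -> R) (Lp : {set {set V}}),
  fractional_spanning_tree src tgt xp ->
  rainbow_free src tgt Ss xp Lp ->
  supp xp \subset supp xs ->
  L \subset Lp ->
  (forall S, S \in Ss -> xsum xp (delta src tgt S) <= xsum xs (delta src tgt S)) ->
  (* step (3): output of the Olver--Zenklusen rounding *)
  forall TL : {set V} -> {set E},
  (forall A, A \in Lp ->
     TL A \subset supp xp /\ spanning_tree_contracted src tgt Lp A (TL A)) ->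
  spanning_tree_G src tgt (\bigcup_(A in Lp) TL A) ->
  (forall S, S \in Ss ->
     #|delta src tgt S :&: \bigcup_(A in Lp) TL A|%:R <= 9 * xsum xp (delta src tgt S)) ->
  (* conclusion: cost bound w.r.t. OPT = OPT(1), and degree bounds *)
  (forall y : E -> R, P_feasible src tgt Ss b 1 y ->
     cost_set c (\bigcup_(A in Lp) TL A) <= lam / (lam - 1) * cost c y) /\
  (forall S, S \in Ss ->
     #|delta src tgt S :&: \bigcup_(A in Lp) TL A|%:R <= 9 * lam * (b S)%:~R).
Proof.
move=> _ c_ge0 _ _ lam_gt1 xs L xs_opt xs_dec xp Lp _ _ supp_xp sLLp xp_deg TL TL_trees
  T_tree T_deg.
set T := \bigcup_(A in Lp) TL A.
have [[xs_fst xs_deg] _] := xs_opt.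
split=> [y y_feas | S SS]; last first.
  apply: le_trans (T_deg S SS) _; rewrite -mulrA ler_wpM2l //.
  exact: le_trans (xp_deg S SS) (xs_deg S SS).
have trees A : A \in Lp -> spanning_tree_contracted src tgt Lp A (TL A) by case/TL_trees.
have T_supp : T \subset supp xs.
  by apply/bigcupsP => A LpA; apply: subset_trans (proj1 (TL_trees A LpA)) supp_xp.
have [_ T_conn T_forest] := T_tree.
have [[_ memL] _] := xs_dec.
have chi_L A : A \in L -> xsum (charvec R T) (Eset src tgt A) = #|A|%:R - 1.
  move=> LA; have [A0 _] := memL _ LA.
  exact: xsum_charvec_card (card_tree_Eset trees T_forest (subsetP sLLp A LA) A0).
have chi_V : xsum (charvec R T) [set: E] = #|V|%:R - 1.
  rewrite -cardsT; apply: xsum_charvec_card; rewrite setIT.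
  apply: card_connected_forest T_forest _ T_conn (fst_vertices_neq0 xs_fst).
  by rewrite EsetT subsetT.
have chi_supp e : xs e = 0 -> charvec R T e <= 0 := charvec_le0 T_supp.
have chi_tight := tight_xsum_ge xs_fst xs_dec chi_supp chi_L.
have [t t_gt0 w_fst] := fst_beyond xs_fst chi_V chi_supp chi_tight.
have := optimal_cost_beyond t_gt0 lam_gt1 xs_opt (@charvec_ge0 _ _ T) w_fst y_feas.
have cost_xs_ge0 : 0 <= cost c xs by apply: sumr_ge0 => e _; rewrite mulr_ge0 //; case: xs_fst.
by rewrite cost_set_charvec mulrAC ler_pdivlMr; lra.
Qed.
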